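(* For integers $n\geq 3$ and $m\geq 1$, $\chi_\rho(FSSD_m(S'(K_n))) = n+2$.
   Context: All graphs are finite and simple. For a positive integer $i$, an $i$-packing in a graph is a set of vertices any two distinct members of which are at distance greater than $i$. The packing chromatic number $\chi_\rho(H)$ is the smallest $k$ such that $V(H)$ can be partitioned into sets $V_1,\dots,V_k$ with each $V_i$ an $i$-packing. For a positive integer $m$, $FSSD_m(G)$ is obtained from $G$ by replacing each edge $xy$ by a copy of $K_{2,m}$: the edge $xy$ is deleted and $m$ new vertices are added, each adjacent to exactly $x$ and $y$. The splitting graph $S'(G)$ of a graph $G$ with vertices $w_1,\dots,w_n$ is obtained from $G$ by adding new vertices $w_1',\dots,w_n'$, where each $w_i'$ is joined to every neighbor of $w_i$ in $G$ (equivalently, the neighborhood corona $G\star K_1$). $K_n$ is the complete graph on $n$ vertices. *)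

From mathcomp Require Import all_boot.
Unset Printing Implicit Defensive.

(* A (finite) graph: a finite vertex type with an adjacency relation.
   All graphs built below are symmetric and irreflexive (simple). *)
Record graph := Graph { gV : finType; gE : rel gV }.

Fixpoint ball (G : graph) (k : nat) (x : gV G) : {set gV G} :=
  match k with
  | 0 => [set x]
  | k'.+1 => @ball G k' x :|: [set y | [exists z in @ball G k' x, @gE G z y]]
  end.

Definition packing (G : graph) (i : nat) (A : {set gV G}) : bool :=
  [forall x in A, forall y in A, (x != y) ==> (y \notin @ball G i x)].

(* colour class j : 'I_k plays the role of V_{j+1} *)
Definition packing_coloring (G : graph) (k : nat) (c : {ffun gV G -> 'I_k}) : bool :=
  [forall j : 'I_k, packing G j.+1 [set x | c x == j]].

Definition packing_colorable (G : graph) (k : nat) : bool :=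
  [exists c : {ffun gV G -> 'I_k}, packing_coloring G k c].

Lemma packing_colorable_card (G : graph) : packing_colorable G #|gV G|.
Proof.
apply/existsP; exists [ffun x => enum_rank x].
apply/forallP => j; apply/forallP => x; apply/implyP; rewrite inE ffunE => /eqP hx.
apply/forallP => y; apply/implyP; rewrite inE ffunE => /eqP hy.
apply/implyP => hxy; exfalso; move/negP: hxy; apply.
by apply/eqP; apply: enum_rank_inj; rewrite hx hy.
Qed.

Definition packing_chi (G : graph) : nat :=
  ex_minn (ex_intro (fun k => packing_colorable G k) _ (packing_colorable_card G)).

Definition K (n : nat) : graph := @Graph 'I_n (fun x y => x != y).

(* splitting graph S'(G): vertices inl w (original) and inr w (the copy w');
   w' adjacent to every neighbour of w in G *)
Definition splitting_rel (G : graph) : rel (gV G + gV G) :=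
  fun a b => match a, b with
  | inl u, inl v => @gE G u v
  | inl u, inr v => @gE G v u
  | inr u, inl v => @gE G u v
  | inr _, inr _ => false
  end.
Definition splitting (G : graph) : graph := @Graph (gV G + gV G)%type (splitting_rel G).

(* FSSD_m(G): each edge xy (taken once, oriented by enum_rank) is deleted and
   replaced by m new vertices (x,y,j), j < m, each adjacent exactly to x and y. *)
Definition fssd_pred (G : graph) (m : nat) : pred (gV G + (gV G * gV G * 'I_m)) :=
  fun v => match v with
  | inl _ => true
  | inr (x, y, _) => @gE G x y && (enum_rank x < enum_rank y)%N
  end.
Definition fssd_V (G : graph) (m : nat) : finType :=
  {v : gV G + (gV G * gV G * 'I_m) | fssd_pred G m v}.
Definition fssd_rel (G : graph) (m : nat) : rel (fssd_V G m) :=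
  fun a b => match val a, val b with
  | inl u, inr (x, y, _) => (u == x) || (u == y)
  | inr (x, y, _), inl u => (u == x) || (u == y)
  | _, _ => false
  end.
Definition FSSD (m : nat) (G : graph) : graph := @Graph (fssd_V G m) (fssd_rel G m).

(* Colour index [j] below stands for the paper's colour [j+1].

   Upper bound (for every graph G): give the subdivision vertices colour 1, the
   copies w' colour 2 and the original vertices pairwise distinct colours >= 3.
   Two copies are never adjacent in S'(G), so their distance in FSSD_m(S'(G)) is
   at least 4.

   Lower bound for K_n, n >= 3: any two original vertices are at distance 2.  An
   original vertex of colour 1 would force its 2(n-1) subdivision neighbours,
   pairwise at distance 2, to take distinct colours >= 2; so with n+1 colours the
   originals use exactly the colours 2, ..., n+1.  If w_i has colour n+1 >= 4, then
   w_i' is at distance <= 4 from w_i and 2 from every other original, hence has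
   colour 1.  A subdivision vertex on an edge w_i' w_j is then at distance <= 3
   from every original, so it has colour 2; but two of them are at distance 2. *)

From mathcomp Require Import all_boot zify.
Set Implicit Arguments.
Unset Strict Implicit.
Unset Printing Implicit Defensive.

Section Balls.
Variable G : graph.
Implicit Types (x y z : gV G) (d e : nat).

Lemma ball_refl d x : x \in ball G d x.
Proof. by elim: d => [|d IH] /=; rewrite ?in_set1 ?inE ?IH. Qed.

Lemma ball_edge d x y z : y \in ball G d x -> gE G y z -> z \in ball G d.+1 x.
Proof. by move=> hy e /=; rewrite !inE; apply/orP; right; apply/existsP; exists y; rewrite hy. Qed.

Lemma edge_ball1 x y : gE G x y -> y \in ball G 1 x.
Proof. exact/ball_edge/ball_refl. Qed.

Lemma ball_mono d e x : d <= e -> ball G d x \subset ball G e x.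
Proof.
move=> /subnKC <-; elim: (e - d) => [|i IH]; first by rewrite addn0.
by rewrite addnS; apply: subset_trans IH _; apply/subsetP => y hy /=; rewrite inE hy.
Qed.

Lemma ball_trans d e x y z : y \in ball G d x -> z \in ball G e y -> z \in ball G (d + e) x.
Proof.
move=> hy; elim: e z => [|e IH] z; first by rewrite addn0 /= inE => /eqP ->.
rewrite addnS => /setUP [/IH hz | ].
  exact: subsetP (ball_mono x (leqnSn _)) _ hz.
by rewrite inE => /existsP [w /andP [/IH hw e_wz]]; apply: ball_edge hw e_wz.
Qed.

Lemma ball1P x y : y \in ball G 1 x -> y = x \/ gE G x y.
Proof.
rewrite /= !inE => /orP [/eqP -> | /existsP [w /andP [/[!inE] /eqP -> e]]]; by [left | right].
Qed.

Lemma ball2P x y : y \in ball G 2 x ->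
  [\/ y = x, gE G x y | exists2 z, gE G x z & gE G z y].
Proof.
rewrite [ball G 2 x]/= inE => /orP [/ball1P [] | ]; [by constructor 1 | by constructor 2 |].
rewrite inE => /existsP [z /andP [/ball1P [-> | e_xz] e_zy]]; first by constructor 2.
by constructor 3; exists z.
Qed.

End Balls.

Lemma packing_coloringP (G : graph) k (c : {ffun gV G -> 'I_k}) :
  reflect (forall x y, c x = c y -> y \in ball G (c x).+1 x -> x = y)
          (packing_coloring G k c).
Proof.
apply: (iffP forallP) => [c_packing x y cxy hy | c_eq j].
  apply/eqP/negPn/negP => neq_xy.
  move/forallP/(_ x)/implyP: (c_packing (c x)); rewrite inE eqxx => /(_ isT).
  move/forallP/(_ y)/implyP; rewrite inE cxy eqxx => /(_ isT)/implyP/(_ neq_xy)/negP.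
  by rewrite -cxy.
apply/forallP => x; apply/implyP; rewrite inE => /eqP cx.
apply/forallP => y; apply/implyP; rewrite inE => /eqP cy.
apply/implyP; apply: contra => hy; apply/eqP/c_eq; by rewrite ?cx ?cy.
Qed.

Section PackingColoring.
Variables (G : graph) (k : nat) (c : {ffun gV G -> 'I_k}).
Hypothesis c_packing : packing_coloring G k c.

Lemma packing_coloring_eq d x y :
  c x = c y -> y \in ball G d x -> d <= (c x).+1 -> x = y.
Proof.
move=> cxy hy hd; move/packing_coloringP: c_packing; apply=> //.
exact: subsetP (ball_mono x hd) _ hy.
Qed.

Lemma packing_coloring_inj_on (T : finType) (D : {pred T}) (f : T -> gV G) :
  {in D &, injective f} ->
  {in D &, forall a b, a != b -> f b \in ball G 2 (f a)} ->
  {in D, forall a, 0 < c (f a)} ->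
  {in D &, injective (c \o f)}.
Proof.
move=> f_inj f_close c_pos a b Da Db /= cab; apply: f_inj => //.
have [-> // | neq_ab] := eqVneq a b.
by apply: packing_coloring_eq cab (f_close _ _ Da Db neq_ab) _; rewrite ltnS c_pos.
Qed.

End PackingColoring.

Lemma packing_coloring_card_le (G : graph) k (c : {ffun gV G -> 'I_k.+1})
    (T : finType) (D : {set T}) (f : T -> gV G) :
  packing_coloring G k.+1 c -> {in D &, injective f} ->
  {in D &, forall a b, a != b -> f b \in ball G 2 (f a)} ->
  {in D, forall a, 0 < c (f a)} -> #|D| <= k.
Proof.
move=> c_packing f_inj f_close c_pos.
rewrite -(card_in_imset (packing_coloring_inj_on c_packing f_inj f_close c_pos)).
apply: (@leq_trans #|[set~ (ord0 : 'I_k.+1)]|); last by rewrite cardsC1 card_ord.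
by apply/subset_leq_card/subsetP => _ /imsetP [a Da ->]; rewrite !inE -val_eqE -lt0n c_pos.
Qed.

Lemma packing_chi_le (G : graph) k : packing_colorable G k -> packing_chi G <= k.
Proof. by rewrite /packing_chi; case: ex_minnP => j _; apply. Qed.

Lemma packing_chi_colorable (G : graph) : packing_colorable G (packing_chi G).
Proof. by rewrite /packing_chi; case: ex_minnP. Qed.

Section Subdivision.
Variables (G : graph) (m : nat).
Implicit Types (a b c : gV G) (t : 'I_m).

Definition fssd_orig a : gV (FSSD m G) := exist _ (inl a) isT.

Definition fssd_sub a b t : gV (FSSD m G) :=
  insubd (fssd_orig a) (inr (if enum_rank a < enum_rank b then (a, b, t) else (b, a, t))).

Lemma fssd_orig_inj : injective fssd_orig.
Proof. by move=> a b /(congr1 val) [->]. Qed.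

Lemma fssd_sym : symmetric (gE (FSSD m G)).
Proof.
move=> x y; rewrite /= /fssd_rel.
by case: (val x) => [?|[[? ?] ?]]; case: (val y) => [?|[[? ?] ?]].
Qed.

Lemma fssd_orig_near_adj a b : fssd_orig b \in ball (FSSD m G) 2 (fssd_orig a) ->
  [\/ b = a, gE G a b | gE G b a].
Proof.
case/ball2P => [/fssd_orig_inj -> | // | [z]]; first by constructor 1.
rewrite /= /fssd_rel /=; case ez: (val z) => [// | [[p q] t]].
have := valP z; rewrite ez => /andP [e_pq _].
by case/orP => /eqP ->; case/orP => /eqP ->; rewrite ?e_pq; constructor.
Qed.

Hypotheses (Gsym : symmetric (gE G)) (Girr : irreflexive (gE G)).

Lemma val_fssd_sub a b t : gE G a b ->
  val (fssd_sub a b t) = inr (if enum_rank a < enum_rank b then (a, b, t) else (b, a, t)).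
Proof.
move=> e_ab; rewrite val_insubd /=; case: ltngtP => [-> | lt_ba | /val_inj/enum_rank_inj eq_ab].
- by rewrite e_ab.
- by rewrite Gsym e_ab lt_ba.
- by rewrite eq_ab Girr in e_ab.
Qed.

Lemma fssd_adj_orig_sub a b c t : gE G a b ->
  gE (FSSD m G) (fssd_orig c) (fssd_sub a b t) = (c == a) || (c == b).
Proof. by move=> e_ab; rewrite /= /fssd_rel val_fssd_sub //; case: ifP; rewrite // orbC. Qed.

Lemma fssd_adj_sub_orig a b c t : gE G a b ->
  gE (FSSD m G) (fssd_sub a b t) (fssd_orig c) = (c == a) || (c == b).
Proof. by rewrite fssd_sym; apply: fssd_adj_orig_sub. Qed.

Lemma fssd_orig_neq_sub a b c t : gE G a b -> fssd_orig c != fssd_sub a b t.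
Proof. by move=> e_ab; apply/eqP => /(congr1 val); rewrite val_fssd_sub. Qed.

Lemma fssd_sub_inj a b b' t : gE G a b -> gE G a b' -> fssd_sub a b t = fssd_sub a b' t -> b = b'.
Proof.
move=> e_ab e_ab' /(congr1 val); rewrite !val_fssd_sub //.
by do 2 case: ifP => _; case=> // *; subst; rewrite Girr in e_ab.
Qed.

Lemma fssd_orig_near_orig a b : 0 < m -> gE G a b ->
  fssd_orig b \in ball (FSSD m G) 2 (fssd_orig a).
Proof.
move=> m_gt0 e_ab; pose t := Ordinal m_gt0.
apply: (@ball_trans _ 1 1 _ (fssd_sub a b t)); apply: edge_ball1.
  by rewrite fssd_adj_orig_sub ?eqxx.
by rewrite fssd_adj_sub_orig ?eqxx ?orbT.
Qed.

Lemma fssd_sub_near_sub a b b' t t' : gE G a b -> gE G a b' ->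
  fssd_sub a b' t' \in ball (FSSD m G) 2 (fssd_sub a b t).
Proof.
move=> e_ab e_ab'; apply: (@ball_trans _ 1 1 _ (fssd_orig a)); apply: edge_ball1.
  by rewrite fssd_adj_sub_orig ?eqxx.
by rewrite fssd_adj_orig_sub ?eqxx.
Qed.

End Subdivision.

Lemma K_sym n : symmetric (gE (K n)).
Proof. by move=> x y /=; rewrite eq_sym. Qed.

Lemma K_irr n : irreflexive (gE (K n)).
Proof. by move=> x /=; rewrite eqxx. Qed.

Lemma splitting_sym (G : graph) : symmetric (gE G) -> symmetric (gE (splitting G)).
Proof. by move=> Gsym [a|a] [b|b] //=; rewrite Gsym. Qed.

Lemma splitting_irr (G : graph) : irreflexive (gE G) -> irreflexive (gE (splitting G)).
Proof. by move=> Girr [a|a] //=; rewrite Girr. Qed.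

Section UpperBound.
Variables (G : graph) (m : nat).
Local Notation H := (FSSD m (splitting G)).

Definition fssd_splitting_color (v : gV H) : 'I_#|gV G|.+2 :=
  match val v with
  | inl (inl w) => @Ordinal #|gV G|.+2 (enum_rank w).+2 (ltn_ord (enum_rank w))
  | inl (inr _) => @Ordinal #|gV G|.+2 1 isT
  | inr _ => ord0
  end.

Lemma fssd_splitting_coloring :
  packing_coloring H #|gV G|.+2 [ffun v => fssd_splitting_color v].
Proof.
apply/packing_coloringP => x y; rewrite !ffunE /fssd_splitting_color.
case ex: (val x) => [[a|a]|[[? ?] ?]]; case ey: (val y) => [[b|b]|[[? ?] ?]] // cxy hy.
- by apply: val_inj; rewrite ex ey; case: cxy => /val_inj/enum_rank_inj ->.
- move: hy; have -> : x = fssd_orig m (inr a : gV (splitting G)) by apply: val_inj.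
  have -> : y = fssd_orig m (inr b : gV (splitting G)) by apply: val_inj.
  by case/fssd_orig_near_adj => [-> | |].
- by case: (ball1P hy) => [-> | ]; rewrite /= /fssd_rel ?ex ?ey.
Qed.

End UpperBound.

Lemma packing_chi_fssd_splitting_le (G : graph) m :
  packing_chi (FSSD m (splitting G)) <= #|gV G|.+2.
Proof.
apply/packing_chi_le/existsP; exists [ffun v => fssd_splitting_color v].
exact: fssd_splitting_coloring.
Qed.

Lemma splitting_K_sym n : symmetric (gE (splitting (K n))).
Proof. exact/splitting_sym/K_sym. Qed.

Lemma splitting_K_irr n : irreflexive (gE (splitting (K n))).
Proof. exact/splitting_irr/K_irr. Qed.

Section LowerBound.
Variables (n m k : nat).
Local Notation SK := (splitting (K n)).
Local Notation H := (FSSD m SK).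
Variable c : {ffun gV H -> 'I_k.+1}.
Hypotheses (n_ge3 : 3 <= n) (m_gt0 : 0 < m) (k_le_n : k <= n).
Hypothesis c_packing : packing_coloring H k.+1 c.

Local Notation u i := (fssd_orig m (inl i : gV SK)).
Local Notation u' i := (fssd_orig m (inr i : gV SK)).
Local Notation s a b := (@fssd_sub SK m a b (Ordinal m_gt0)).
Local Hint Resolve splitting_K_sym splitting_K_irr : core.

Lemma orig_color_gt0 i : 0 < c (u i).
Proof.
rewrite lt0n; apply/negP => /eqP cu0.
pose D := [set v | gE SK (inl i) v].
have cardD : #|D| = (n + n) - 2.
  have -> : D = ~: [set inl i; inr i].
    by apply/setP => -[j|j]; rewrite !inE -!sum_eqE /= ?orbF // eq_sym.
  have := cardsC [set inl i; inr i : gV SK]; rewrite cards2 /= card_sum card_ord.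
  by move=> <-; rewrite addKn.
have : #|D| <= k.
  apply: (packing_coloring_card_le c_packing (f := fun v => s (inl i) v)).
  - by move=> v w e_iv e_iw; rewrite !inE in e_iv e_iw; apply: fssd_sub_inj.
  - by move=> v w e_iv e_iw _; rewrite !inE in e_iv e_iw; apply: fssd_sub_near_sub.
  move=> v e_iv; rewrite inE in e_iv; rewrite lt0n; apply/negP => /eqP cv0.
  have: u i = s (inl i) v.
    apply: (packing_coloring_eq c_packing (d := 1)) => //.
      by apply: val_inj; rewrite /= cu0 cv0.
    by apply: edge_ball1; rewrite fssd_adj_orig_sub ?eqxx.
  by apply/eqP; apply: fssd_orig_neq_sub.
lia.
Qed.

Lemma orig_color_inj : injective (fun i => c (u i)).
Proof.
move=> i j; apply: (packing_coloring_inj_on c_packing (D := predT) (f := fun i => u i)) => //.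
- by move=> {}i {}j _ _ /fssd_orig_inj [].
- by move=> {}i {}j _ _ neq_ij; apply: fssd_orig_near_orig.
- by move=> {}i _; apply: orig_color_gt0.
Qed.

Lemma orig_colors : [set c (u i) | i : 'I_n] = [set~ ord0].
Proof.
apply/eqP; rewrite eqEcard cardsC1 !card_ord card_imset; last exact: orig_color_inj.
rewrite card_ord k_le_n andbT; apply/subsetP => _ /imsetP [i _ ->].
by rewrite !inE -val_eqE -lt0n orig_color_gt0.
Qed.

Lemma n_eq_k : n = k.
Proof.
have := congr1 (fun A : {set 'I_k.+1} => #|A|) orig_colors.
by rewrite cardsC1 card_ord card_imset ?card_ord; last exact: orig_color_inj.
Qed.

Lemma orig_color_surj (x : 'I_k.+1) : 0 < x -> exists i, c (u i) = x.
Proof.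
move=> x_gt0; have : x \in [set~ ord0] by rewrite !inE -val_eqE -lt0n.
by rewrite -orig_colors => /imsetP [i _ ->]; exists i.
Qed.

Lemma copy_color_eq0 i0 : 3 <= c (u i0) -> c (u' i0) = 0 :> nat.
Proof.
move=> ci0_ge3; apply/eqP; rewrite -leqn0 leqNgt; apply/negP => c'_gt0.
have [l cl] := orig_color_surj c'_gt0.
suff : u l = u' i0 by move/fssd_orig_inj.
case: (eqVneq l i0) cl => [-> | neq_li0] cl.
- have /card_gt0P [j] : 0 < #|[set~ i0]| by rewrite cardsC1 card_ord; lia.
  rewrite !inE => neq_ji0.
  apply: (packing_coloring_eq c_packing (d := 2 + 2) cl); last by lia.
  apply: (@ball_trans _ 2 2 _ (u j)); apply: fssd_orig_near_orig => //; by rewrite /= eq_sym.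
- apply: (packing_coloring_eq c_packing (d := 2) cl); last by rewrite ltnS orig_color_gt0.
  by apply: fssd_orig_near_orig => //; rewrite /= eq_sym.
Qed.

Lemma spoke_color_eq1 i0 j :
  c (u' i0) = 0 :> nat -> j != i0 -> c (s (inr i0) (inl j)) = 1 :> nat.
Proof.
move=> c'0 neq_ji0.
have e_i0j : gE SK (inr i0) (inl j) by rewrite /= eq_sym.
set y := s (inr i0) (inl j).
have y_gt0 : 0 < c y.
  rewrite lt0n; apply/negP => /eqP cy0.
  have : u' i0 = y.
    apply: (packing_coloring_eq c_packing (d := 1)) => //.
      by apply: val_inj; rewrite /= c'0 cy0.
    by apply: edge_ball1; rewrite fssd_adj_orig_sub ?eqxx.
  by apply/eqP; apply: fssd_orig_neq_sub.
apply/eqP; rewrite eqn_leq y_gt0 andbT leqNgt; apply/negP => cy_gt1.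
have [l cl] := orig_color_surj y_gt0.
suff : u l = y by apply/eqP; apply: fssd_orig_neq_sub.
have uj_near : u j \in ball H 1 y by apply: edge_ball1; rewrite fssd_adj_sub_orig ?eqxx ?orbT.
symmetry; case: (eqVneq l j) cl => [-> | neq_lj] cl.
  exact: (packing_coloring_eq c_packing (esym cl) uj_near).
apply: (packing_coloring_eq c_packing (d := 1 + 2) (esym cl)); last by lia.
by apply: ball_trans uj_near _; apply: fssd_orig_near_orig => //; rewrite /= eq_sym.
Qed.

Lemma no_small_packing_coloring : False.
Proof.
have [i0 ci0] : exists i0, c (u i0) = ord_max by apply: orig_color_surj; rewrite /= -n_eq_k; lia.
have c'0 : c (u' i0) = 0 :> nat by apply: copy_color_eq0; rewrite ci0 /= -n_eq_k.
have /card_gt1P [j1 [j2 [j1_i0 j2_i0 neq_j12]]] : 1 < #|[set~ i0]|.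
  by rewrite cardsC1 card_ord; lia.
rewrite !inE in j1_i0 j2_i0.
have e_j1 : gE SK (inr i0) (inl j1) by rewrite /= eq_sym.
have e_j2 : gE SK (inr i0) (inl j2) by rewrite /= eq_sym.
have : s (inr i0) (inl j1) = s (inr i0) (inl j2).
  apply: (packing_coloring_eq c_packing (d := 2)).
  - by apply: val_inj; rewrite /= !spoke_color_eq1.
  - exact: fssd_sub_near_sub.
  - by rewrite spoke_color_eq1.
move/(fssd_sub_inj (@splitting_K_sym n) (@splitting_K_irr n) e_j1 e_j2) => [eq_j12].
by rewrite eq_j12 eqxx in neq_j12.
Qed.

End LowerBound.

Lemma packing_chi_fssd_splitting_K_ge n m :
  3 <= n -> 0 < m -> n.+2 <= packing_chi (FSSD m (splitting (K n))).
Proof.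
move=> n_ge3 m_gt0; have := packing_chi_colorable (FSSD m (splitting (K n))).
case: (packing_chi _) => [|k] /existsP [c c_packing].
  have n_gt0 : 0 < n by lia.
  by case: (c (fssd_orig m (inl (Ordinal n_gt0) : gV (splitting (K n))))).
rewrite ltnS leqNgt; apply/negP => k_le_n.
exact: (no_small_packing_coloring n_ge3 m_gt0 k_le_n c_packing).
Qed.

Theorem proposition9 (n m : nat) :
  3 <= n -> 1 <= m -> packing_chi (FSSD m (splitting (K n))) = n + 2.
Proof.
move=> n_ge3 m_gt0; apply/eqP; rewrite addn2 eqn_leq packing_chi_fssd_splitting_K_ge // andbT.
by have := packing_chi_fssd_splitting_le (K n) m; rewrite card_ord.
Qed.
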